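(* Let $P$ be a $d$-simplex ($d\ge2$) in general position with vertices $v_1,\dots,v_{d+1}$. Then (i) for every $1\le i\le d$ and every $\sigma\in\mathfrak S_d$ with $\sigma(d)=i$, $\operatorname{sign}(F_i)=\operatorname{sign}\big(\det X(\sigma,d)/\det X(\sigma,d-1)\big)$; (ii) for every $\sigma\in\mathfrak S_d$, $\operatorname{sign}(F_{d+1})=-\operatorname{sign}\big(\det X(\sigma,d)/\det Y(\sigma,d)\big)=-\operatorname{sign}(z(\sigma,d))$.
   Context: Write $v_i=(x_{i,1},\dots,x_{i,d})$ and let $F_i$ be the facet of $P$ opposite $v_i$ (spanned by all vertices except $v_i$). For $\sigma\in\mathfrak S_d$ and $1\le k\le d$, $X(\sigma,k)$ is the $(k+1)\times(k+1)$ matrix whose $r$-th row is $(1,x_{\sigma(r),1},\dots,x_{\sigma(r),k})$ for $r=1,\dots,k$ and whose last row is $(1,x_{d+1,1},\dots,x_{d+1,k})$; $Y(\sigma,k)$ is the $k\times k$ matrix whose $r$-th row is $(1,x_{\sigma(r),1},\dots,x_{\sigma(r),k-1})$, $r=1,\dots,k$; and $z(\sigma,k)=\det X(\sigma,k)/\det Y(\sigma,k)$. $\pi$ forgets the last coordinate, $\pi^{(j)}$ the last $j$ coordinates. $P$ is in general position if for every $0\le k\le d-1$ and every $(k+1)$-subset $U$ of its vertices, $\pi^{(d-k)}(\mathrm{conv}(U))$ is a $k$-simplex. For $y\in\pi(P)$, $n(y,P),p(y,P)$ are the lowest and highest points of $P\cap\pi^{-1}(y)$ in the last coordinate; $NB(P)$,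 $PB(P)$ are the sets of all such points. A facet $F$ is positive ($\operatorname{sign}(F)=+1$) if some relative interior point of $F$ lies in $PB(P)$ and negative ($\operatorname{sign}(F)=-1$) if some relative interior point lies in $NB(P)$. *)

From HB Require Import structures.
From mathcomp Require Import all_boot all_order all_algebra all_fingroup.
Set Implicit Arguments. Unset Strict Implicit. Unset Printing Implicit Defensive.
Import Order.TTheory GRing.Theory Num.Theory.
Local Open Scope ring_scope.

Section Defs.
Variable R : realFieldType.

(* 0-based coordinate access with default 0 *)
Definition getc (d : nat) (p : 'rV[R]_d) (j : nat) : R :=
  match @insub nat (fun j => (j < d)%N) 'I_d j with Some j' => p 0 j' | None => 0 end.

Definition projk (d k : nat) (p : 'rV[R]_d) : 'rV[R]_k := \row_(j < k) getc p j.

Definition conv_on (n m : nat) (A : {set 'I_n}) (w : 'I_n -> 'rV[R]_m) (x : 'rV[R]_m) : Prop :=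
  exists l : 'I_n -> R, (forall j, 0 <= l j) /\ (forall j, j \notin A -> l j = 0) /\
    \sum_j l j = 1 /\ x = \sum_j l j *: w j.

Definition aff_on (n m : nat) (A : {set 'I_n}) (w : 'I_n -> 'rV[R]_m) (x : 'rV[R]_m) : Prop :=
  exists l : 'I_n -> R, (forall j, j \notin A -> l j = 0) /\
    \sum_j l j = 1 /\ x = \sum_j l j *: w j.

Definition aff_indep (n m : nat) (A : {set 'I_n}) (w : 'I_n -> 'rV[R]_m) : Prop :=
  forall l : 'I_n -> R, (forall j, j \notin A -> l j = 0) ->
    \sum_j l j = 0 -> \sum_j l j *: w j = 0 -> forall j, l j = 0.

Definition relint_on (n m : nat) (A : {set 'I_n}) (w : 'I_n -> 'rV[R]_m) (x : 'rV[R]_m) : Prop :=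
  conv_on A w x /\ exists e : R, 0 < e /\
    forall y, aff_on A w y -> (forall j, `|y 0 j - x 0 j| < e) -> conv_on A w y.

Variable d : nat.
Variable v : 'I_d.+1 -> 'rV[R]_d.

Definition is_simplex : Prop := aff_indep [set: 'I_d.+1] v.

Definition general_position : Prop :=
  forall k : nat, (k < d)%N -> forall U : {set 'I_d.+1}, #|U| = k.+1 ->
    aff_indep U (fun i => projk k (v i)).

Definition polyP (x : 'rV[R]_d) : Prop := conv_on [set: 'I_d.+1] v x.

Definition in_PB (x : 'rV[R]_d) : Prop :=
  polyP x /\ forall y, polyP y -> projk d.-1 y = projk d.-1 x -> getc y d.-1 <= getc x d.-1.
Definition in_NB (x : 'rV[R]_d) : Prop :=
  polyP x /\ forall y, polyP y -> projk d.-1 y = projk d.-1 x -> getc x d.-1 <= getc y d.-1.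

Definition facet_pos (i : 'I_d.+1) : Prop :=
  exists x, relint_on [set~ i] v x /\ in_PB x.
Definition facet_neg (i : 'I_d.+1) : Prop :=
  exists x, relint_on [set~ i] v x /\ in_NB x.

(* vertex v_{sigma(r)} for a 0-based row index r < d *)
Definition vsig (s : 'S_d) (r : nat) : 'rV[R]_d :=
  match @insub nat (fun j => (j < d)%N) 'I_d r with
  | Some r' => v (widen_ord (leqnSn d) (s r')) | None => 0 end.

Definition Xmat (s : 'S_d) (k : nat) : 'M[R]_k.+1 :=
  \matrix_(r < k.+1, c < k.+1)
    (if c == 0 :> nat then 1
     else getc (if (r < k)%N then vsig s r else v ord_max) c.-1).

Definition Ymat (s : 'S_d) (k : nat) : 'M[R]_k :=
  \matrix_(r < k, c < k) (if c == 0 :> nat then 1 else getc (vsig s r) c.-1).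

Definition zval (s : 'S_d) (k : nat) : R := \det (Xmat s k) / \det (Ymat s k).

End Defs.

From Pilot Require Import Defs.
From HB Require Import structures.
From mathcomp Require Import all_boot all_order all_algebra all_fingroup.
From mathcomp Require Import ring lra zify.
Import Order.TTheory GRing.Theory Num.Theory.
Set Implicit Arguments. Unset Strict Implicit. Unset Printing Implicit Defensive.
Local Open Scope ring_scope.

(* The facet F_i lies in the hyperplane where an affine form phi vanishes, and
   expanding det X along the row of v_i gives such a form: phi(z) is the
   determinant with that row replaced by (1, z), divided by the cofactor c of
   the last coordinate, so that phi(z) = z_d + (affine in z_1..z_(d-1)) and
   phi(v_i) = det X / c.  On a vertical fibre phi differs from the last
   coordinate by a constant, so a relative interior point of F_i is highest in
   its fibre of P iff P lies below the hyperplane, i.e. iff phi(v_i) < 0, and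
   lowest iff phi(v_i) > 0.  The cofactor c is -det X(sigma, d-1) when v_i
   sits in row d, and det Y(sigma, d) for the facet opposite v_(d+1).  General
   position makes these cofactors nonzero and makes the vertical projection of
   F_i nondegenerate, which puts the barycentre of F_i in its relative
   interior. *)

Section Coordinates.
Variable R : realFieldType.

Lemma getc_ord d (p : 'rV[R]_d) (j : 'I_d) : getc p j = p 0 j.
Proof. by rewrite /getc; case: insubP => [j' _ /val_inj -> //|]; rewrite ltn_ord. Qed.

Lemma getc_ge d (p : 'rV[R]_d) (j : nat) : (d <= j)%N -> getc p j = 0.
Proof.
move=> hj; rewrite /getc; case: insubP => [j' hj' _|//].
by rewrite ltnNge hj in hj'.
Qed.

Lemma getc_widen n (p : 'rV[R]_n.+1) (k : 'I_n) :
  getc p k = p 0 (widen_ord (leqnSn n) k).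
Proof. exact: (getc_ord p (widen_ord (leqnSn n) k)). Qed.

Lemma getc_last n (p : 'rV[R]_n.+1) : getc p n = p 0 ord_max.
Proof. exact: (getc_ord p ord_max). Qed.

Lemma getc_sum d n (l : 'I_n -> R) (w : 'I_n -> 'rV[R]_d) j :
  getc (\sum_k l k *: w k) j = \sum_k l k * getc (w k) j.
Proof.
case: (ltnP j d) => hj; last by rewrite getc_ge // big1 // => k _; rewrite getc_ge ?mulr0.
have -> : j = Ordinal hj by [].
by rewrite !getc_ord summxE; apply: eq_bigr => k _; rewrite mxE getc_ord.
Qed.

Lemma getc_comb2 d (a b : R) (x y : 'rV[R]_d) j :
  getc (a *: x + b *: y) j = a * getc x j + b * getc y j.
Proof.
case: (ltnP j d) => hj; last by rewrite !getc_ge ?mulr0 ?addr0.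
have -> : j = Ordinal hj by [].
by rewrite !getc_ord !mxE.
Qed.

Lemma getc_dist_lt d (x y : 'rV[R]_d) (e : R) : 0 < e ->
  (forall k, `|y 0 k - x 0 k| < e) -> forall j, `|getc y j - getc x j| < e.
Proof.
move=> e0 h j; case: (ltnP j d) => hj; last by rewrite !getc_ge // subrr normr0.
by have -> : j = Ordinal hj by []; rewrite !getc_ord.
Qed.

(* Homogeneous coordinates [1, z_1, ..., z_(d-1)] of the vertical projection of z. *)
Definition hrow d (z : 'rV[R]_d) : 'rV[R]_d :=
  \row_c (if c == 0 :> nat then 1 else getc z c.-1).

Lemma ler_sum_term (I : finType) (F : I -> R) (j : I) :
  (forall k, 0 <= F k) -> F j <= \sum_k F k.
Proof. by move=> h; rewrite (bigD1 j) //= lerDl sumr_ge0. Qed.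

Lemma mulmx_row_dist m n (N : 'M[R]_(m, n)) (u u' : 'rV[R]_m) (e : R) r :
  (forall c, `|u 0 c - u' 0 c| <= e) ->
  `|(u *m N) 0 r - (u' *m N) 0 r| <= e * \sum_c `|N c r|.
Proof.
move=> hu.
have -> : (u *m N) 0 r - (u' *m N) 0 r = \sum_c (u 0 c - u' 0 c) * N c r.
  by rewrite !mxE -sumrB; apply: eq_bigr => c _; rewrite mulrBl.
rewrite mulr_sumr; apply: le_trans (ler_norm_sum _ _ _) _.
by apply: ler_sum => c _; rewrite normrM ler_wpM2r.
Qed.

(* A vanishing combination [u] of the rows of [A] is a vanishing affine
   dependence among the points [w (g r)]. *)
Lemma aff_indep_det_neq0 m n (U : {set 'I_n}) (w : 'I_n -> 'rV[R]_m)
  (g : 'I_m.+1 -> 'I_n) (A : 'M[R]_m.+1) :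
  injective g -> (forall r, g r \in U) -> aff_indep U w ->
  (forall r, A r 0 = 1) -> (forall r (c : 'I_m), A r (lift 0 c) = w (g r) 0 c) ->
  \det A != 0.
Proof.
move=> ginj gU hind hA0 hA1; apply/negP => /det0P [u u0 uA].
pose l j := \sum_r (if g r == j then u 0 r else 0).
have hl r : l (g r) = u 0 r.
  rewrite /l (bigD1 r) //= eqxx big1 ?addr0 // => r' hr'.
  by rewrite (inj_eq ginj) (negPf hr').
have sumE (G : 'I_n -> R) : \sum_j l j * G j = \sum_r u 0 r * G (g r).
  rewrite /l; under eq_bigr do rewrite mulr_suml.
  rewrite exchange_big /=; apply: eq_bigr => r _.
  rewrite (bigD1 (g r)) //= eqxx big1 ?addr0 // => j /negPf.
  by rewrite eq_sym => ->; rewrite mul0r.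
have l0 j : j \notin U -> l j = 0.
  move=> hj; rewrite /l big1 // => r _; case: eqP => // e.
  by move: hj; rewrite -e gU.
have s0 : \sum_j l j = 0.
  have := sumE (fun _ => 1); under eq_bigr do rewrite mulr1.
  move=> ->; under eq_bigr do rewrite mulr1.
  have h := congr1 (fun M : 'M[R]_(1, m.+1) => M 0 0) uA; rewrite !mxE in h.
  by apply: etrans h; apply: eq_bigr => r _; rewrite hA0 mulr1.
have s1 : \sum_j l j *: w j = 0.
  apply/rowP => c; rewrite summxE mxE.
  under eq_bigr do rewrite mxE.
  rewrite (sumE (fun j => w j 0 c)).
  have h := congr1 (fun M : 'M[R]_(1, m.+1) => M 0 (lift 0 c)) uA.
  rewrite !mxE in h.
  by apply: etrans h; apply: eq_bigr => r _; rewrite hA1.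
move/eqP: u0; apply; apply/rowP => r.
by rewrite mxE -hl (hind l l0 s0 s1).
Qed.

End Coordinates.

Section Hulls.
Variables (R : realFieldType) (n m : nat) (A : {set 'I_n}) (w : 'I_n -> 'rV[R]_m).

Lemma aff_on_conv x : conv_on A w x -> aff_on A w x.
Proof. by move=> [l [_ hl]]; exists l. Qed.

Lemma aff_on_comb2 (a b : R) x y : a + b = 1 ->
  aff_on A w x -> aff_on A w y -> aff_on A w (a *: x + b *: y).
Proof.
move=> hab [lx [lxA [lxs ->]]] [ly [lyA [lys ->]]].
exists (fun j => a * lx j + b * ly j); split.
  by move=> j hj; rewrite lxA ?lyA // !mulr0 addr0.
split; first by rewrite big_split /= -!mulr_sumr lxs lys !mulr1.
rewrite !scaler_sumr -big_split /=.
by apply: eq_bigr => j _; rewrite !scalerA -scalerDl.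
Qed.

Lemma relint_on_extend x q : relint_on A w x -> aff_on A w q ->
  exists2 s, 0 < s & conv_on A w ((1 + s) *: x + (- s) *: q).
Proof.
move=> [cx [e [e0 he]]] aq.
pose T : R := \sum_k `|x 0 k - q 0 k|.
have T0 : 0 <= T by apply: sumr_ge0.
pose s := e / (T + 1).
have s0 : 0 < s by rewrite divr_gt0 // ltr_wpDl.
exists s => //; apply: he; first by apply: aff_on_comb2 (aff_on_conv cx) aq; ring.
move=> k; have -> : ((1 + s) *: x + (- s) *: q) 0 k - x 0 k = s * (x 0 k - q 0 k).
  by rewrite !mxE; ring.
rewrite normrM gtr0_norm //; apply: (@le_lt_trans _ _ (s * T)).
  apply: ler_wpM2l; first exact: ltW.
  by apply: (@ler_sum_term _ _ (fun k0 => `|x 0 k0 - q 0 k0|)).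
by rewrite /s mulrAC -mulrA gtr_pMr // ltr_pdivrMr ?ltr_wpDl // mul1r ltrDl.
Qed.

Lemma conv_on_mix_vertex (a b : R) x j : 0 <= a -> 0 <= b -> a + b = 1 ->
  conv_on A w x -> conv_on [set: 'I_n] w (a *: x + b *: w j).
Proof.
move=> a0 b0 hab [l [l0 [_ [ls ->]]]].
have dj : forall F : 'I_n -> 'rV[R]_m, F j = \sum_k (if k == j then F k else 0).
  by move=> F; rewrite (bigD1 j) //= eqxx big1 ?addr0 // => k /negPf ->.
exists (fun k => a * l k + (if k == j then b else 0)); split.
  by move=> k; apply: addr_ge0; [exact: mulr_ge0 | case: eqP].
split; first by move=> k; rewrite in_setT.
split.
  rewrite big_split /= -mulr_sumr ls mulr1 (bigD1 j) //= eqxx big1 ?addr0 //.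
  by move=> k /negPf ->.
rewrite (dj (fun k => b *: w k)) scaler_sumr -big_split /=.
by apply: eq_bigr => k _; rewrite scalerDl scalerA; case: eqP => // _; rewrite scale0r.
Qed.

End Hulls.

Section AffineForm.
Variables (R : realFieldType) (n : nat) (a0 : R) (a : 'I_n.+1 -> R).

Definition aform (z : 'rV[R]_n.+1) : R := a0 + \sum_k a k * z 0 k.

Lemma aform_comb m (l : 'I_m -> R) (z : 'I_m -> 'rV[R]_n.+1) :
  \sum_j l j = 1 -> aform (\sum_j l j *: z j) = \sum_j l j * aform (z j).
Proof.
move=> hl; rewrite /aform.
under [RHS]eq_bigr do rewrite mulrDr.
rewrite big_split /= -mulr_suml hl mul1r; congr (_ + _).
under eq_bigr do rewrite summxE mulr_sumr.
rewrite exchange_big /=; apply: eq_bigr => j _; rewrite mulr_sumr.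
by apply: eq_bigr => k _; rewrite mxE mulrCA.
Qed.

Lemma aform_comb2 (al be : R) z w : al + be = 1 ->
  aform (al *: z + be *: w) = al * aform z + be * aform w.
Proof.
move=> hab; rewrite /aform.
under eq_bigr do rewrite !mxE mulrDr mulrCA [a _ * (be * _)]mulrCA.
rewrite big_split /= -!mulr_sumr.
have -> : be = 1 - al by lra.
ring.
Qed.

Hypothesis a_max : a ord_max = 1.

Lemma aform_fibre y x : projk n y = projk n x ->
  aform y - aform x = getc y n - getc x n.
Proof.
move=> h; rewrite !getc_last /aform !big_ord_recr /= a_max !mul1r.
have -> : \sum_(k < n) a (widen_ord (leqnSn n) k) * y 0 (widen_ord (leqnSn n) k)
  = \sum_(k < n) a (widen_ord (leqnSn n) k) * x 0 (widen_ord (leqnSn n) k).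
  apply: eq_bigr => k _; congr (_ * _).
  by have := congr1 (fun M : 'rV[R]_n => M 0 k) h; rewrite !mxE !getc_widen.
ring.
Qed.

End AffineForm.

Section Facet.
Variables (R : realFieldType) (n : nat) (v : 'I_n.+2 -> 'rV[R]_n.+1) (i : 'I_n.+2).

Definition facet_mx : 'M[R]_n.+1 := \matrix_(r, c) hrow (v (lift i r)) 0 c.

Lemma facet_mx_unit : general_position v -> facet_mx \in unitmx.
Proof.
move=> hgp; rewrite unitmxE unitfE.
have hU : #|[set~ i]| = n.+1 by rewrite cardsC1 card_ord.
apply: (aff_indep_det_neq0 (g := lift i) _ _ (hgp n (ltnSn n) _ hU)).
- exact: lift_inj.
- by move=> r; rewrite in_setC1 eq_sym neq_lift.
- by move=> r; rewrite !mxE.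
- by move=> r k; rewrite !mxE.
Qed.

Lemma facet_mx_comb (l : 'I_n.+2 -> R) : l i = 0 ->
  \row_r l (lift i r) *m facet_mx =
  \row_c (if c == 0 :> nat then \sum_j l j else getc (\sum_j l j *: v j) c.-1).
Proof.
move=> li; apply/rowP => c; rewrite mxE [RHS]mxE.
under eq_bigr do rewrite !mxE.
case: ifP => _.
  by rewrite (bigD1_ord i) //= li add0r; apply: eq_bigr => r _; rewrite mulr1.
rewrite getc_sum (bigD1_ord i) //= li mul0r add0r.
exact: eq_bigr.
Qed.

Hypothesis facet_unit : facet_mx \in unitmx.

Lemma facet_coords (l : 'I_n.+2 -> R) : l i = 0 -> \sum_j l j = 1 ->
  \row_r l (lift i r) = hrow (\sum_j l j *: v j) *m invmx facet_mx.
Proof.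
move=> li ls; rewrite -[LHS](mulmxK facet_unit) facet_mx_comb //.
by congr (_ *m _); apply/rowP => c; rewrite !mxE ls.
Qed.

Definition barycentre_wt (j : 'I_n.+2) : R := if j == i then 0 else n.+1%:R^-1.

Definition facet_barycentre := \sum_j barycentre_wt j *: v j.

Lemma barycentre_wt_sum : \sum_j barycentre_wt j = 1.
Proof.
rewrite (bigD1_ord i) //= /barycentre_wt eqxx add0r.
under eq_bigr do rewrite eq_sym (negbTE (neq_lift _ _)).
by rewrite sumr_const card_ord -[_ *+ _]mulr_natr mulVf // pnatr_eq0.
Qed.

Lemma barycentre_wt_ge0 j : 0 <= barycentre_wt j.
Proof. by rewrite /barycentre_wt; case: ifP; rewrite ?invr_ge0 ?ler0n. Qed.

Lemma barycentre_conv (A : {set 'I_n.+2}) : [set~ i] \subset A -> conv_on A v facet_barycentre.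
Proof.
move=> hA; exists barycentre_wt; split; first exact: barycentre_wt_ge0.
split; last by split; [exact: barycentre_wt_sum|].
move=> j hj; rewrite /barycentre_wt ifT //; apply: contraR hj => hji.
by apply: (subsetP hA); rewrite in_setC1.
Qed.

(* The barycentric coordinates on the facet depend continuously (through
   [invmx facet_mx]) on the point of the affine hull, and equal [1/(n+1)] at
   the barycentre. *)
Lemma facet_barycentre_relint : relint_on [set~ i] v facet_barycentre.
Proof.
pose K : R := n.+1%:R; pose N := invmx facet_mx.
pose S : R := \sum_r \sum_c `|N c r|.
pose e := (K * (S + 1))^-1.
have K0 : 0 < K by rewrite ltr0n.
have S0 : 0 <= S by apply: sumr_ge0 => r _; apply: sumr_ge0.
have e0 : 0 < e by rewrite invr_gt0 mulr_gt0 // ltr_wpDl.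
have eS : e * S < K^-1.
  rewrite /e invfM -mulrA gtr_pMr ?invr_gt0 //.
  by rewrite mulrC ltr_pdivrMr ?ltr_wpDl // mul1r ltrDl.
have wi : barycentre_wt i = 0 by rewrite /barycentre_wt eqxx.
split; first exact: barycentre_conv.
exists e; split => // y [l [l0 [ls ly]]] hy.
have li : l i = 0 by apply: l0; rewrite in_setC1 eqxx.
exists l; split; last by [].
move=> j; case: (unliftP i j) => [r ->|->]; last by rewrite li.
have e1 : l (lift i r) = (hrow y *m N) 0 r by rewrite ly -(facet_coords li ls) mxE.
have e2 : K^-1 = (hrow facet_barycentre *m N) 0 r.
  rewrite -(facet_coords wi barycentre_wt_sum) mxE.
  by rewrite /barycentre_wt eq_sym (negbTE (neq_lift _ _)).
have bnd : `|(hrow y *m N) 0 r - (hrow facet_barycentre *m N) 0 r| <= e * S.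
  have dist c : `|hrow y 0 c - hrow facet_barycentre 0 c| <= e.
    rewrite !mxE; case: ifP => _; first by rewrite subrr normr0 ltW.
    exact/ltW/getc_dist_lt.
  apply: le_trans (mulmx_row_dist N r dist) _.
  apply: ler_wpM2l; first exact: ltW.
  by apply: (@ler_sum_term _ _ (fun r => \sum_c `|N c r|)) => r'; apply: sumr_ge0.
rewrite e1; move: bnd; rewrite -e2 ler_norml => /andP [h1 h2].
clearbody K e S N; lra.
Qed.

Lemma facet_vertical_foot :
  exists2 q, aff_on [set~ i] v q & projk n q = projk n (v i).
Proof.
pose Lq := hrow (v i) *m invmx facet_mx.
pose lq (j : 'I_n.+2) : R := if unlift i j is Some r then Lq 0 r else 0.
have lqi : lq i = 0 by rewrite /lq unlift_none.
have hc := facet_mx_comb lqi.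
have hLq : \row_r lq (lift i r) = Lq by apply/rowP => r; rewrite mxE /lq liftK.
rewrite hLq mulmxKV // in hc.
exists (\sum_j lq j *: v j).
  exists lq; split; first by move=> j; rewrite in_setC1 negbK => /eqP ->.
  split => //.
  by have := congr1 (fun M : 'rV[R]_n.+1 => M 0 0) hc; rewrite !mxE /= => ->.
apply/rowP => k; have := congr1 (fun M : 'rV[R]_n.+1 => M 0 (lift 0 k)) hc.
by rewrite !mxE /= => ->.
Qed.

End Facet.

Section FibreExtremal.
Variables (R : realFieldType) (n : nat) (v : 'I_n.+2 -> 'rV[R]_n.+1).

Definition fibre_extremal (eps : R) (x : 'rV[R]_n.+1) := Defs.polyP v x /\
  forall y, Defs.polyP v y -> projk n y = projk n x -> eps * (getc y n - getc x n) <= 0.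

Lemma in_PB_fibre_extremal x : in_PB v x <-> fibre_extremal 1 x.
Proof.
split=> -[px hx]; split=> // y py pyx; first by rewrite mul1r subr_le0 hx.
by have := hx y py pyx; rewrite mul1r subr_le0.
Qed.

Lemma in_NB_fibre_extremal x : in_NB v x <-> fibre_extremal (-1) x.
Proof.
split=> -[px hx]; split=> // y py pyx; first by rewrite mulN1r oppr_le0 subr_ge0 hx.
by have := hx y py pyx; rewrite mulN1r oppr_le0 subr_ge0.
Qed.

Variables (i : 'I_n.+2) (a0 : R) (a : 'I_n.+1 -> R).
Hypothesis a_max : a ord_max = 1.
Hypothesis aform_facet : forall j, j != i -> aform a0 a (v j) = 0.
Hypothesis aform_vertex : aform a0 a (v i) != 0.
Hypothesis facet_unit : facet_mx v i \in unitmx.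

Lemma aform_hull (l : 'I_n.+2 -> R) : \sum_j l j = 1 ->
  aform a0 a (\sum_j l j *: v j) = l i * aform a0 a (v i).
Proof.
move=> ls; rewrite aform_comb // (bigD1 i) //= big1 ?addr0 // => j hj.
by rewrite aform_facet // mulr0.
Qed.

Lemma aform_aff_facet x : aff_on [set~ i] v x -> aform a0 a x = 0.
Proof. by move=> [l [l0 [ls ->]]]; rewrite aform_hull // l0 ?mul0r // in_setC1 eqxx. Qed.

Lemma barycentre_fibre_extremal eps : eps * aform a0 a (v i) < 0 ->
  fibre_extremal eps (facet_barycentre v i).
Proof.
move=> hneg; split; first exact: barycentre_conv (subsetT _).
move=> y [mu [mu0 [_ [mus ->]]]] hp.
have ab : aform a0 a (facet_barycentre v i) = 0.
  by apply/aform_aff_facet/aff_on_conv/barycentre_conv.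
rewrite -(aform_fibre a0 a_max hp) aform_hull // ab subr0.
by rewrite mulrCA mulr_ge0_le0 // ltW.
Qed.

(* Push a relative interior point x of F_i slightly away from the foot q of the
   vertical through v_i, then back towards v_i: this stays in P on the fibre of
   x and moves [aform] in the direction of [aform (v i)]. *)
Lemma relint_fibre_extremal_sign eps x : eps != 0 -> relint_on [set~ i] v x ->
  fibre_extremal eps x -> eps * aform a0 a (v i) < 0.
Proof.
move=> eps0 hx [_ hB]; rewrite ltNge; apply/negP => hge.
have hpos : 0 < eps * aform a0 a (v i) by rewrite lt_def hge andbT mulf_neq0.
have [q aq pq] := facet_vertical_foot facet_unit.
have [s s0 cx2] := relint_on_extend hx aq.
set x2 := (1 + s) *: x + (- s) *: q in cx2.
have s1 : 1 + s != 0 by rewrite gt_eqF // addr_gt0.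
pose t := s / (1 + s).
have t0 : 0 < t by rewrite divr_gt0 // addr_gt0.
pose y := (1 + s)^-1 *: x2 + t *: v i.
have py : Defs.polyP v y.
  rewrite /Defs.polyP /y; apply: (conv_on_mix_vertex i _ _ _ cx2); first by rewrite invr_ge0 ltW // addr_gt0.
    exact: ltW.
  by rewrite /t; field.
have ax : aform a0 a x = 0 by apply/aform_aff_facet/aff_on_conv; case: hx.
have ax2 : aform a0 a x2 = 0 by apply/aform_aff_facet/aff_on_conv.
have pr : projk n y = projk n x.
  apply/rowP => k; have := congr1 (fun M : 'rV[R]_n => M 0 k) pq.
  by rewrite !mxE !getc_comb2 => ->; rewrite /t; field.
have := hB y py pr.
rewrite -(aform_fibre a0 a_max pr) ax subr0 aform_comb2; last by rewrite /t; field.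
rewrite ax2 mulr0 add0r mulrCA; apply/negP; rewrite -ltNge.
exact: mulr_gt0.
Qed.

Lemma facet_fibre_extremal_iff eps : eps != 0 ->
  (exists x, relint_on [set~ i] v x /\ fibre_extremal eps x) <->
  eps * aform a0 a (v i) < 0.
Proof.
move=> eps0; split; first by move=> [x [hx hB]]; exact: relint_fibre_extremal_sign hB.
move=> hneg; exists (facet_barycentre v i); split.
  exact: facet_barycentre_relint.
exact: barycentre_fibre_extremal.
Qed.

Lemma facet_pos_aform : facet_pos v i <-> aform a0 a (v i) < 0.
Proof.
rewrite -[X in _ <-> X < 0]mul1r -(facet_fibre_extremal_iff (oner_neq0 R)).
by split=> -[x [hx hB]]; exists x; split=> //; apply/in_PB_fibre_extremal.
Qed.

Lemma facet_neg_aform : facet_neg v i <-> 0 < aform a0 a (v i).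
Proof.
have eps0 : -1 != 0 :> R by rewrite oppr_eq0 oner_neq0.
rewrite -oppr_lt0 -mulN1r -(facet_fibre_extremal_iff eps0).
by split=> -[x [hx hB]]; exists x; split=> //; apply/in_NB_fibre_extremal.
Qed.

End FibreExtremal.

Section CofactorForm.
Variables (R : realFieldType) (n : nat) (v : 'I_n.+3 -> 'rV[R]_n.+2) (i : 'I_n.+3).
Variables (A : 'M[R]_n.+3) (w : 'I_n.+3 -> 'rV[R]_n.+2) (p : 'I_n.+3).
Hypothesis A_rows : forall r c, A r c = if c == 0 :> nat then 1 else getc (w r) c.-1.
Hypothesis w_vertex : w p = v i.
Hypothesis w_facet : forall j, j != i -> exists2 r, r != p & w r = v j.
Hypothesis detA : \det A != 0.
Hypothesis cofA : cofactor A p (lift 0 ord_max) != 0.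

Let c := cofactor A p (lift 0 ord_max).
Let a0 := cofactor A p 0 / c.
Let a (k : 'I_n.+2) := cofactor A p (lift 0 k) / c.

Lemma aform_cofactor r : aform a0 a (w r) = (\sum_k A r k * cofactor A p k) / c.
Proof.
rewrite /aform [X in _ = X / _]big_ord_recl A_rows /= mul1r mulrDl mulr_suml.
by congr (_ + _); apply: eq_bigr => k _; rewrite A_rows /= getc_ord /a mulrC mulrA.
Qed.

(* Row [r != p] against the cofactors of row [p] is an alien expansion, hence 0. *)
Lemma aform_cofactor_facet j : j != i -> aform a0 a (v j) = 0.
Proof.
case/w_facet => r rp <-; rewrite aform_cofactor.
have := congr1 (fun M : 'M[R]_n.+3 => M r p) (mul_mx_adj A).
rewrite !mxE (negbTE rp) mulr0n => h.
rewrite (_ : \sum_k A r k * cofactor A p k = 0) ?mul0r //.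
by apply: etrans h; apply: eq_bigr => k _; rewrite mxE.
Qed.

Lemma facet_sign_cofactor : general_position v ->
  (facet_pos v i <-> \det A / c < 0) /\ (facet_neg v i <-> 0 < \det A / c).
Proof.
move=> hgp.
have a_max : a ord_max = 1 by rewrite /a divff.
have avi : aform a0 a (v i) = \det A / c.
  by rewrite -w_vertex aform_cofactor -expand_det_row.
have av0 : aform a0 a (v i) != 0 by rewrite avi mulf_neq0 // invr_eq0.
have hM := facet_mx_unit i hgp.
rewrite -avi; split.
  exact: (facet_pos_aform a_max aform_cofactor_facet av0 hM).
exact: (facet_neg_aform a_max aform_cofactor_facet av0 hM).
Qed.

End CofactorForm.

Lemma ltn_neq_ord_max n (j : 'I_n.+1) : j != ord_max -> (j < n)%N.
Proof.
move=> hj; move: (ltn_ord j); rewrite ltnS leq_eqVlt => /orP [/eqP e|//].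
by case/negP: hj; apply/eqP/val_inj.
Qed.

Lemma vsig_ord (R : realFieldType) d (v : 'I_d.+1 -> 'rV[R]_d) (s : 'S_d) (r : 'I_d) :
  vsig v s r = v (widen_ord (leqnSn d) (s r)).
Proof. by rewrite /vsig; case: insubP => [r' _ /val_inj -> //|]; rewrite ltn_ord. Qed.

Section SignFormula.
Variables (R : realFieldType) (n : nat) (v : 'I_n.+3 -> 'rV[R]_n.+2) (s : 'S_n.+2).
Hypothesis hsimp : is_simplex v.
Hypothesis hgp : general_position v.

Definition xrow_pt (r : 'I_n.+3) := if (r < n.+2)%N then vsig v s r else v ord_max.

Lemma Xmat_rows r c :
  Xmat v s n.+2 r c = if c == 0 :> nat then 1 else getc (xrow_pt r) c.-1.
Proof. by rewrite mxE. Qed.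

Lemma xrow_pt_perm (j : 'I_n.+3) (hj : (j < n.+2)%N) :
  xrow_pt (widen_ord (leqnSn _) ((s^-1)%g (Ordinal hj))) = v j.
Proof. by rewrite /xrow_pt /= ltn_ord vsig_ord permKV; congr v; apply: val_inj. Qed.

Lemma det_Xmat_neq0 : \det (Xmat v s n.+2) != 0.
Proof.
pose g (r : 'I_n.+3) : 'I_n.+3 :=
  if (r < n.+2)%N then widen_ord (leqnSn _) (s (inord r)) else ord_max.
apply: (aff_indep_det_neq0 (U := [set: 'I_n.+3]) (w := v) (g := g)).
- move=> r1 r2; rewrite /g; case: ifP => h1; case: ifP => h2.
  + move=> /(congr1 val) /= /val_inj /perm_inj /(congr1 (@nat_of_ord _)).
    by rewrite !inordK // => /val_inj.
  + by move=> /(congr1 val) /= e; have := ltn_ord (s (inord r1)); rewrite e ltnn.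
  + by move=> /(congr1 val) /= e; have := ltn_ord (s (inord r2)); rewrite -e ltnn.
  + move=> _; apply: val_inj; move: (ltn_ord r1) (ltn_ord r2) h1 h2 => /= l1 l2.
    move/negbT => h1 /negbT h2; lia.
- by move=> r; rewrite in_setT.
- exact: hsimp.
- by move=> r; rewrite mxE.
- move=> r c; rewrite mxE /= getc_ord /g /xrow_pt; case: ifP => h //.
  by rewrite -vsig_ord inordK.
Qed.

Lemma cofactor_Xmat_last :
  cofactor (Xmat v s n.+2) ord_max (lift 0 ord_max) = \det (Ymat v s n.+2).
Proof.
have -> : lift 0 (ord_max : 'I_n.+2) = ord_max :> 'I_n.+3 by apply: val_inj.
rewrite /cofactor addnn -signr_odd odd_double expr0 mul1r.
by congr (\det _); apply/matrixP => r c; rewrite !mxE !lift_max /= ltn_ord.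
Qed.

Lemma det_Ymat_neq0 : \det (Ymat v s n.+2) != 0.
Proof.
have hU : #|[set~ (ord_max : 'I_n.+3)]| = n.+2 by rewrite cardsC1 card_ord.
apply: (aff_indep_det_neq0 (g := fun r => widen_ord (leqnSn _) (s r)) _ _
          (hgp (ltnSn n.+1) hU)).
- by move=> r1 r2 /(congr1 val) /= /val_inj /perm_inj.
- move=> r; rewrite in_setC1; apply/eqP => /(congr1 val) /= e.
  by have := ltn_ord (s r); rewrite e ltnn.
- by move=> r; rewrite mxE.
- by move=> r c; rewrite !mxE /= vsig_ord.
Qed.

Lemma facet_sign_last :
  (facet_pos v ord_max <-> \det (Xmat v s n.+2) / \det (Ymat v s n.+2) < 0) /\
  (facet_neg v ord_max <-> 0 < \det (Xmat v s n.+2) / \det (Ymat v s n.+2)).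
Proof.
have w_vertex : xrow_pt ord_max = v ord_max by rewrite /xrow_pt /= ltnn.
have w_facet j : j != ord_max -> exists2 r, r != ord_max & xrow_pt r = v j.
  move=> hj; have hjl := ltn_neq_ord_max hj.
  exists (widen_ord (leqnSn _) ((s^-1)%g (Ordinal hjl))); last exact: xrow_pt_perm.
  apply/eqP => /(congr1 val) /= e.
  by have := ltn_ord ((s^-1)%g (Ordinal hjl)); rewrite e ltnn.
have cof := cofactor_Xmat_last.
have cof0 : cofactor (Xmat v s n.+2) ord_max (lift 0 ord_max) != 0.
  by rewrite cof det_Ymat_neq0.
by rewrite -cof; apply: facet_sign_cofactor Xmat_rows w_vertex w_facet det_Xmat_neq0 cof0 hgp.
Qed.

Variable i : 'I_n.+3.
Hypothesis hi : (i < n.+2)%N.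
Hypothesis hs : forall j : 'I_n.+2, val j = n.+1 -> val (s j) = val i.

Lemma cofactor_Xmat_pred :
  cofactor (Xmat v s n.+2) (inord n.+1) (lift 0 ord_max) = - \det (Xmat v s n.+1).
Proof.
have -> : lift 0 (ord_max : 'I_n.+2) = ord_max :> 'I_n.+3 by apply: val_inj.
rewrite /cofactor /= inordK //.
have -> : (-1) ^+ (n.+1 + n.+2) = -1 :> R.
  by rewrite -signr_odd addnS addnn /= odd_double /= expr1.
rewrite mulN1r; congr (- \det _); apply/matrixP => r c.
rewrite !mxE lift_max /= /bump inordK //.
case: (ltnP r n.+1) => hr; first by rewrite add0n ltn_ord.
by rewrite add1n ltnS ltnNge hr.
Qed.

Lemma det_Xmat_pred_neq0 : \det (Xmat v s n.+1) != 0.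
Proof.
have hU : #|[set~ i]| = n.+2 by rewrite cardsC1 card_ord.
pose g (r : 'I_n.+2) : 'I_n.+3 :=
  if (r < n.+1)%N then widen_ord (leqnSn _) (s r) else ord_max.
apply: (aff_indep_det_neq0 (g := g) _ _ (hgp (ltnSn n.+1) hU)).
- move=> r1 r2; rewrite /g; case: ifP => h1; case: ifP => h2.
  + by move=> /(congr1 val) /= /val_inj /perm_inj.
  + by move=> /(congr1 val) /= e; have := ltn_ord (s r1); rewrite e ltnn.
  + by move=> /(congr1 val) /= e; have := ltn_ord (s r2); rewrite -e ltnn.
  + move=> _; apply: val_inj; move: (ltn_ord r1) (ltn_ord r2) h1 h2 => /= l1 l2.
    move/negbT => h1 /negbT h2; lia.
- move=> r; rewrite in_setC1 /g; case: ifP => h.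
    apply/eqP => /(congr1 val) /= e.
    have : s r = s ord_max by apply: val_inj; rewrite /= e (hs (j := ord_max)).
    by move/perm_inj => e3; move: h; rewrite e3 /= ltnn.
  by apply/eqP => e; move: hi; rewrite -e ltnn.
- by move=> r; rewrite mxE.
- by move=> r c; rewrite !mxE /= /g; case: ifP => h //; rewrite vsig_ord.
Qed.

Lemma facet_sign_lower :
  (facet_pos v i <-> 0 < \det (Xmat v s n.+2) / \det (Xmat v s n.+1)) /\
  (facet_neg v i <-> \det (Xmat v s n.+2) / \det (Xmat v s n.+1) < 0).
Proof.
have w_vertex : xrow_pt (inord n.+1) = v i.
  rewrite /xrow_pt inordK // ltnSn (vsig_ord v s ord_max).
  by congr v; apply: val_inj; exact: hs.
have w_facet j : j != i -> exists2 r, r != inord n.+1 & xrow_pt r = v j.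
  move=> hj; have [/eqP hjm|hjm] := boolP (j == ord_max).
    exists ord_max; last by rewrite hjm /xrow_pt /= ltnn.
    by apply/eqP => /(congr1 val) /=; rewrite inordK //; lia.
  have hjl := ltn_neq_ord_max hjm.
  exists (widen_ord (leqnSn _) ((s^-1)%g (Ordinal hjl))); last exact: xrow_pt_perm.
  apply/eqP => /(congr1 val) /=; rewrite inordK // => e.
  have := hs e; rewrite permKV /= => e2.
  by move/eqP: hj; apply; apply: val_inj.
have cof0 : cofactor (Xmat v s n.+2) (inord n.+1) (lift 0 ord_max) != 0.
  by rewrite cofactor_Xmat_pred oppr_eq0 det_Xmat_pred_neq0.
have := facet_sign_cofactor Xmat_rows w_vertex w_facet det_Xmat_neq0 cof0 hgp.
by rewrite cofactor_Xmat_pred invrN mulrN oppr_lt0 oppr_gt0.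
Qed.

End SignFormula.

Theorem mainTheorem7 (R : realFieldType) (d : nat) (v : 'I_d.+1 -> 'rV[R]_d) :
  (2 <= d)%N -> is_simplex v -> general_position v ->
  (forall (i : 'I_d.+1) (s : 'S_d), (val i < d)%N ->
     (forall j : 'I_d, val j = d.-1 -> val (s j) = val i) ->
     (facet_pos v i <-> 0 < \det (Xmat v s d) / \det (Xmat v s d.-1)) /\
     (facet_neg v i <-> \det (Xmat v s d) / \det (Xmat v s d.-1) < 0))
  /\
  (forall s : 'S_d,
     (facet_pos v ord_max <-> \det (Xmat v s d) / \det (Ymat v s d) < 0) /\
     (facet_neg v ord_max <-> 0 < \det (Xmat v s d) / \det (Ymat v s d)) /\
     (facet_pos v ord_max <-> zval v s d < 0) /\
     (facet_neg v ord_max <-> 0 < zval v s d)).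
Proof.
case: d v => [|[|n]] v hd hsimp hgp //.
split=> [i s hi hs | s]; first exact: (facet_sign_lower hsimp hgp hi hs).
by have [hpos hneg] := facet_sign_last s hsimp hgp; rewrite /zval.
Qed.
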